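(* Let $c=q_1^{a_1}\cdots q_\omega^{a_\omega}$ with $q_1,\dots,q_\omega$ distinct primes and $a_j\ge1$. If $a_i=1$ for some $i$, then $$E_c(q_i)=\frac{\varphi(c)}{q_i-1}-E_{c/q_i}(q_i).$$
   Context: $\varphi$ is Euler's totient function. For a positive integer $n$ with distinct prime factors $p_1,\dots,p_r$ ($r=0$ if $n=1$) and real $x\ne 0$, $$E_n(x)=\sum_{S\subseteq\{1,\dots,r\}}(-1)^{|S|}\left\lfloor \frac{n}{x\prod_{j\in S}p_j}\right\rfloor$$ (so $E_1(x)=\lfloor 1/x\rfloor$). *)

From HB Require Import structures.
From mathcomp Require Import all_boot all_order all_algebra.
Set Implicit Arguments. Unset Strict Implicit. Unset Printing Implicit Defensive.
Import Order.TTheory GRing.Theory Num.Theory.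
Local Open Scope ring_scope.

Definition E (R : archiRealFieldType) (n : nat) (x : R) : int :=
  \sum_(S : {set 'I_(size (primes n))})
     (-1) ^+ #|S| * Num.floor (n%:R / (x * \prod_(j in S) ((nth 0%N (primes n) j)%:R : R))).

From HB Require Import structures.
From mathcomp Require Import all_boot all_order all_algebra.
Set Implicit Arguments. Unset Strict Implicit. Unset Printing Implicit Defensive.
Import Order.TTheory GRing.Theory Num.Theory.
Local Open Scope ring_scope.

(* Write c = m q with q coprime to m. Splitting the subsets of the prime
   factors of c according to whether they contain q gives
   E_c(q) = L(m) - L(m/q), where L is the Legendre sum over the primes of m.
   At y = m every quotient is an integer, so L(m) = m prod_(p | m) (1 - 1/p)
   = phi(m), while L(m/q) = E_m(q); and phi(c) = phi(m) (q - 1). *)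

Lemma nth_rem (T : eqType) (x0 x : T) (s : seq T) (j : nat) :
  nth x0 (rem x s) j = nth x0 s (bump (index x s) j).
Proof.
elim: s j => [|y s IHs] j /=; first by rewrite !nth_nil.
rewrite eq_sym; case: eqP => _ //=.
by case: j => [|j] //=; rewrite bumpS.
Qed.

Section LiftSets.

Variables (k : nat) (i : 'I_k.+1).

Lemma notin_imset_lift (T : {set 'I_k}) : i \notin lift i @: T.
Proof. by apply/imsetP => -[j _ /eqP]; rewrite (negbTE (neq_lift i j)). Qed.

Lemma imset_liftK : cancel (fun T : {set 'I_k} => lift i @: T) (fun S => lift i @^-1: S).
Proof. by move=> T; apply/setP => j; rewrite !inE mem_imset //; apply: lift_inj. Qed.

Lemma imset_preimset_lift (S : {set 'I_k.+1}) : lift i @: (lift i @^-1: S) = S :\ i.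
Proof.
apply/setP => x; rewrite !inE; case: (unliftP i x) => [j ->|->].
  rewrite mem_imset ?inE; last exact: lift_inj.
  by rewrite eq_sym neq_lift.
by rewrite eqxx (negbTE (notin_imset_lift _)).
Qed.

Lemma sum_set_lift (V : nmodType) (F : {set 'I_k.+1} -> V) :
  \sum_(S : {set 'I_k.+1}) F S =
  \sum_(T : {set 'I_k}) (F (lift i @: T) + F (i |: lift i @: T)).
Proof.
rewrite (bigID (fun S : {set _} => i \in S)) [LHS]addrC big_split /=.
congr (_ + _).
  rewrite (reindex_onto (fun T : {set 'I_k} => lift i @: T)
                        (fun S => lift i @^-1: S)) /=.
    by apply: eq_bigl => T; rewrite notin_imset_lift imset_liftK eqxx.
  move=> S /negPf iS; rewrite imset_preimset_lift.
  by apply/setP => x; rewrite !inE; case: eqP => // ->.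
rewrite (reindex_onto (fun T : {set 'I_k} => i |: lift i @: T)
                      (fun S => lift i @^-1: S)) /=.
  apply: eq_bigl => T; rewrite setU11 -[X in _ == X](imset_liftK T).
  by apply/eqP/setP => j; rewrite !inE eq_sym (negbTE (neq_lift i j)).
by move=> S iS; rewrite imset_preimset_lift setD1K.
Qed.

End LiftSets.

Lemma prod_1subr_sum_set (R : comPzRingType) (k : nat) (x : 'I_k -> R) :
  \prod_(j < k) (1 - x j) = \sum_(S : {set 'I_k}) (-1) ^+ #|S| * \prod_(j in S) x j.
Proof.
under eq_bigr do rewrite addrC.
rewrite bigA_distr; apply: eq_bigr => S _.
by rewrite -big_mkcond prodrN.
Qed.

Lemma dvdn_prod_primes (m : nat) : (0 < m)%N -> (\prod_(p <- primes m) p %| m)%N.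
Proof.
move=> m_gt0; rewrite {2}(prod_prime_decomp m_gt0) prime_decompE big_map /=.
rewrite !big_seq; apply: (big_ind2 (fun a b => a %| b)%N) => // [*|p].
  exact: dvdn_mul.
by rewrite -logn_gt0; case: (logn p m) => // e _; rewrite expnS dvdn_mulr.
Qed.

Lemma totient_prod_primes (R : numFieldType) (m : nat) : (0 < m)%N ->
  (totient m)%:R = m%:R * \prod_(p <- primes m) (1 - (p%:R : R)^-1).
Proof.
move=> m_gt0; have -> : (m%:R : R) = \prod_(p <- primes m) (p ^ logn p m)%:R.
  by rewrite -natr_prod {1}(prod_prime_decomp m_gt0) prime_decompE big_map.
rewrite totientE // natr_prod -big_split /= !big_seq; apply: eq_bigr => p.
move=> p_in; have p_pr : prime p by move: p_in; rewrite mem_primes => /andP[].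
move: p_in; rewrite -logn_gt0; case: (logn p m) => // e _.
have p_gt0 := prime_gt0 p_pr.
rewrite /= -subn1 natrM natrB // expnSr natrM -mulrA mulrBr mulr1 mulfV.
  exact: mulrC.
by rewrite pnatr_eq0 -lt0n.
Qed.

Section LegendreSum.

Variable R : archiRealFieldType.

Definition legendre_sum (k : nat) (f : nat -> nat) (y : R) : int :=
  \sum_(S : {set 'I_k}) (-1) ^+ #|S| * Num.floor (y / \prod_(j in S) (f j)%:R).

Lemma eq_legendre_sum k (f g : nat -> nat) y :
  f =1 g -> legendre_sum k f y = legendre_sum k g y.
Proof.
by move=> fg; apply: eq_bigr => S _; under eq_bigr do rewrite fg.
Qed.

Lemma E_legendre_sum n (x : R) :
  E n x = legendre_sum (size (primes n)) (nth 0%N (primes n)) (n%:R / x).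
Proof. by apply: eq_bigr => S _; rewrite invfM mulrA. Qed.

Lemma legendre_sum_lift k (f : nat -> nat) (y : R) (i : 'I_k.+1) :
  legendre_sum k.+1 f y =
  legendre_sum k (f \o bump i) y - legendre_sum k (f \o bump i) (y / (f i)%:R).
Proof.
have lift_inj_on (T : {set 'I_k}) : {in T &, injective (lift i)}.
  exact: in2W (@lift_inj _ i).
rewrite /legendre_sum (sum_set_lift i) big_split -sumrN /=.
congr (_ + _); apply: eq_bigr => T _.
  by rewrite card_imset ?big_imset //; apply: lift_inj.
rewrite cardsU1 notin_imset_lift card_imset; last exact: lift_inj.
rewrite big_setU1 ?notin_imset_lift //= big_imset //=.
by rewrite exprS invfM mulrA mulN1r mulNr.
Qed.

Lemma legendre_sum_rem (q : nat) (s : seq nat) (y : R) : q \in s ->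
  legendre_sum (size s) (nth 0%N s) y =
  legendre_sum (size (rem q s)) (nth 0%N (rem q s)) y
  - legendre_sum (size (rem q s)) (nth 0%N (rem q s)) (y / q%:R).
Proof.
move=> q_in; have size_s : size s = (size (rem q s)).+1.
  by rewrite size_rem //; case: s q_in.
have idx_q : (index q s < (size (rem q s)).+1)%N by rewrite -size_s index_mem.
rewrite size_s (legendre_sum_lift _ _ (Ordinal idx_q)) /= nth_index //.
by congr (_ - _); apply: eq_legendre_sum => j; rewrite /= nth_rem.
Qed.

Lemma legendre_sum_primes (m : nat) : (0 < m)%N ->
  legendre_sum (size (primes m)) (nth 0%N (primes m)) m%:R = (totient m)%:Z.
Proof.
move=> m_gt0; set k := size (primes m); set f := nth 0%N (primes m).
have dvdn_prod_m (S : {set 'I_k}) : (\prod_(j in S) f j %| m)%N.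
  apply: dvdn_trans (dvdn_prod_primes m_gt0).
  rewrite (big_nth 0%N) big_mkord [X in (_ %| X)%N](bigID (mem S)) /=.
  exact: dvdn_mulr.
apply: (@intr_inj R); rewrite rmorph_sum /= -pmulrn totient_prod_primes //.
rewrite (big_nth 0%N) big_mkord -/k -/f prod_1subr_sum_set mulr_sumr.
apply: eq_bigr => S _; rewrite -natr_prod -natf_div // pmulrn intrKfloor.
rewrite rmorphM rmorphXn rmorphN1 /= -pmulrn natf_div // natr_prod.
by rewrite prodfV mulrCA.
Qed.

End LegendreSum.

Lemma notin_primes_divn (c q : nat) : prime q -> logn q c = 1%N ->
  q \notin primes (c %/ q).
Proof.
move=> q_pr lognc; have : (0 < logn q c)%N by rewrite lognc.
rewrite logn_gt0 mem_primes => /and3P[_ _ q_dvd_c].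
by rewrite -logn_gt0 logn_div // lognc logn_prime // eqxx.
Qed.

Lemma primes_divn_prime (c q : nat) : prime q -> logn q c = 1%N ->
  primes (c %/ q) = rem q (primes c).
Proof.
move=> q_pr lognc; have q_in : q \in primes c by rewrite -logn_gt0 lognc.
move: (q_in); rewrite mem_primes => /and3P[_ c_gt0 q_dvd_c].
have q_notin := notin_primes_divn q_pr lognc.
apply: (irr_sorted_eq ltn_trans ltnn (sorted_primes _)).
  exact: (subseq_sorted ltn_trans (rem_subseq q _) (sorted_primes c)).
move=> p; rewrite (mem_rem_uniq _ (primes_uniq c)) inE /=.
have [-> | p_neq_q] := eqVneq p q; first exact: negbTE.
have q_gt0 := prime_gt0 q_pr.
have m_gt0 : (0 < c %/ q)%N by rewrite divn_gt0 // dvdn_leq.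
rewrite -[in primes c](divnK q_dvd_c) primesM //.
by rewrite (primes_prime q_pr) mem_seq1 (negbTE p_neq_q) orbF.
Qed.

Lemma E_divn_prime (R : archiRealFieldType) (c q : nat) :
  prime q -> logn q c = 1%N ->
  E c (q%:R : R) = (totient (c %/ q))%:Z - E (c %/ q) (q%:R : R).
Proof.
move=> q_pr lognc; have q_in : q \in primes c by rewrite -logn_gt0 lognc.
move: (q_in); rewrite mem_primes => /and3P[_ c_gt0 q_dvd_c].
rewrite !E_legendre_sum (legendre_sum_rem _ q_in) -primes_divn_prime //.
by rewrite -natf_div // legendre_sum_primes // divn_gt0 ?prime_gt0 // dvdn_leq.
Qed.

Theorem lemma4 (R : archiRealFieldType) (c q : nat) :
  (0 < c)%N -> prime q -> (q %| c)%N -> logn q c = 1%N ->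
  ((E c (q%:R : R))%:~R : R) =
    (totient c)%:R / (q%:R - 1) - ((E (c %/ q) (q%:R : R))%:~R : R).
Proof.
move=> c_gt0 q_pr q_dvd_c lognc.
have m_gt0 : (0 < c %/ q)%N by rewrite divn_gt0 ?prime_gt0 // dvdn_leq.
have m_coprime_q : coprime (c %/ q) q.
  rewrite coprime_sym prime_coprime //.
  by apply: contra (notin_primes_divn q_pr lognc); rewrite mem_primes q_pr m_gt0.
rewrite E_divn_prime // rmorphB /= -pmulrn -[in totient c](divnK q_dvd_c).
rewrite totient_coprime // (totient_prime q_pr) -subn1 natrM natrB ?prime_gt0 //.
by rewrite mulfK // subr_eq0 pnatr_eq1 gtn_eqF ?prime_gt1.
Qed.
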